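(* Let $G'=(V,E')$ be a simple undirected loop-free graph with $V=\{1,\ldots,n\}$, let each pair $\{i,j\}$ of distinct nodes have a cost $c_{ij}\ge0$, let $B\ge0$, and for each $i\in V$ let $D_i=\{L_i,L_i+1,\ldots,R_i\}\subseteq\{0,\ldots,n-1\}$ be a nonempty interval. Let $H$ be the weighted graph constructed from these data as described in the context. Then $H$ has a perfect matching of total cost at most $B$ if and only if there is an edge set $E$ on $V$ with $\sum_{e\in E\triangle E'}c_e\le B$ such that in $(V,E)$ every node $i$ has degree in $D_i$.
   Context: Write $d_i$ for the degree of $i$ in $G'$. The graph $H$ is built as follows. (a) For each edge $e=\{i,i'\}\in E'$ add two nodes $y^-_{e,i},y^-_{e,i'}$ joined by an edge; for each non-edge pair $e=\{i,i'\}\notin E'$ ($i\ne i'$) add two nodes $y^+_{e,i},y^+_{e,i'}$ joined by an edge. (b) For each $i\in V$ add a set $X^+_i$ of $\min(R_i,n-d_i-1)$ nodes and a set $X^-_i$ of $\min(n-L_i-1,d_i)$ nodes; join every node of $X^+_i$ to every $y^+_{e,i}$ (over all non-edges $e$ at $i$), every node of $X^-_i$ to every $y^-_{e,i}$ (over all edges $e$ at $i$), and every node of $X^+_i$ to every node of $X^-_i$. (c) Let $\sigma_i=d_i+|X^+_i|-|X^-_i|$ (one has $L_i\le\sigma_i\le R_i$). Add a set $Z^+_i$ of $\sigma_i-L_i$ nodes joined completely to $X^+_i$, and a set $Z^-_i$ of $R_i-\sigma_i$ nodes joined completely to $X^-_i$. Add all edges among the union of all $Z^+_i,Z^-_i$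 over all $i$ (a complete graph). If the total number of nodes so far is odd, add one extra node $\hat z$ adjacent to all nodes of all $Z^+_i,Z^-_i$. (d) Costs: for each $e=\{i,i'\}\in E'$, each edge between $y^-_{e,i}$ and a node of $X^-_i$ and between $y^-_{e,i'}$ and a node of $X^-_{i'}$ has cost $c_e/2$; for each $e=\{i,i'\}\notin E'$, each edge between $y^+_{e,i}$ and a node of $X^+_i$ and between $y^+_{e,i'}$ and a node of $X^+_{i'}$ has cost $c_e/2$; all other edges of $H$ have cost $0$. The cost of a matching is the sum of the costs of its edges. For edge sets, $c_{ij}$ is the cost of removing $\{i,j\}$ if it lies in $E'$ and of adding it otherwise; $E\triangle E'$ is the symmetric difference. *)

From HB Require Import structures.
From mathcomp Require Import all_boot all_order all_algebra.
Set Implicit Arguments. Unset Strict Implicit. Unset Printing Implicit Defensive.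
Import Order.TTheory GRing.Theory Num.Theory.

(* Nodes of G' are 'I_n (i.e. {0..n-1} standing for {1..n}).
   A simple graph on 'I_n is a symmetric irreflexive relation. *)
Definition simple_graph (n : nat) (E : rel 'I_n) : Prop :=
  (forall i j, E i j = E j i) /\ (forall i, ~~ E i i).

Definition deg (n : nat) (E : rel 'I_n) (i : 'I_n) : nat := #|[set j | E i j]|.

Definition kY  : 'I_5 := @Ordinal 5 0 isT.
Definition kXp : 'I_5 := @Ordinal 5 1 isT.
Definition kXm : 'I_5 := @Ordinal 5 2 isT.
Definition kZp : 'I_5 := @Ordinal 5 3 isT.
Definition kZm : 'I_5 := @Ordinal 5 4 isT.

Section Construction.
Variable n : nat.
Variable E' : rel 'I_n.
Variables lo hi : 'I_n -> nat.    (* D_i = {lo i, ..., hi i} *)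

Definition dG (i : 'I_n) : nat := deg E' i.
Definition nXp (i : 'I_n) : nat := minn (hi i) (n - dG i - 1).
Definition nXm (i : 'I_n) : nat := minn (n - lo i - 1) (dG i).
Definition sigma (i : 'I_n) : nat := dG i + nXp i - nXm i.
Definition nZp (i : 'I_n) : nat := sigma i - lo i.
Definition nZm (i : 'I_n) : nat := hi i - sigma i.

(* Some (t, i, k) encodes:
     t = kY  : the node y_{e,i} for e = {i,k} (i <> k); it is y^-_{e,i} if
               {i,k} \in E' and y^+_{e,i} otherwise;
     t = kXp : the k-th node of X^+_i  (k < |X^+_i|);
     t = kXm : the k-th node of X^-_i  (k < |X^-_i|);
     t = kZp : the k-th node of Z^+_i  (k < |Z^+_i|);
     t = kZm : the k-th node of Z^-_i  (k < |Z^-_i|);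
   None encodes the extra node \hat z. *)
Definition node : finType := option ('I_5 * 'I_n * 'I_n).

Definition base (v : node) : bool :=
  match v with
  | None => false
  | Some (t, i, k) =>
      if t == kY then i != k
      else if t == kXp then (k < nXp i)%N
      else if t == kXm then (k < nXm i)%N
      else if t == kZp then (k < nZp i)%N
      else (k < nZm i)%N
  end.

Definition hatz : bool := odd #|[pred v : node | base v]|.

Definition inH (v : node) : bool := if v is Some _ then base v else hatz.

Definition isZ (t : 'I_5) : bool := (t == kZp) || (t == kZm).

(* one-directional description of the edges of H *)
Definition adj0 (u v : node) : bool :=
  match u, v with
  | Some (t, i, k), Some (s, j, l) =>
      [|| [&& t == kY, s == kY, i == l & k == j],      (* y_{e,i} -- y_{e,i'} *)
          [&& t == kXp, s == kY, j == i & ~~ E' i l],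
          [&& t == kXm, s == kY, j == i & E' i l],
          [&& t == kXp, s == kXm & j == i],
          [&& t == kZp, s == kXp & j == i],
          [&& t == kZm, s == kXm & j == i]
        | isZ t && isZ s]
  | None, Some (s, _, _) => isZ s
  | _, _ => false
  end.

Definition adjH (u v : node) : bool :=
  [&& inH u, inH v, u != v & adj0 u v || adj0 v u].

Section Costs.
Variable R : realFieldType.
Variable c : 'I_n -> 'I_n -> R.

Definition cost0 (u v : node) : R :=
  match u, v with
  | Some (t, i, _), Some (s, j, l) =>
      if [&& (t == kXp) || (t == kXm), s == kY & j == i] then (c i l / 2)%R
      else 0%R
  | _, _ => 0%R
  end.

Definition costH (u v : node) : R :=
  if adjH u v then (cost0 u v + cost0 v u)%R else 0%R.

(* cost of an edge given as a 2-element set {u,v}: equals costH u v *)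
Definition edge_cost (e : {set node}) : R :=
  (\sum_(u in e) \sum_(v in e | u != v) costH u v / 2)%R.

Definition matching_cost (M : {set {set node}}) : R :=
  (\sum_(e in M) edge_cost e)%R.

Definition edit_cost (E : rel 'I_n) : R :=
  (\sum_(i < n) \sum_(j < n | (i < j)%N && (E i j != E' i j)) c i j)%R.

End Costs.

Definition perfect_matching (M : {set {set node}}) : Prop :=
  (forall e, e \in M -> exists u v, adjH u v /\ e = [set u; v]) /\
  (forall v, inH v -> #|[set e in M | v \in e]| = 1%N).

End Construction.

From HB Require Import structures.
From mathcomp Require Import all_boot all_order all_algebra.
From mathcomp Require Import zify.
Import Order.TTheory GRing.Theory Num.Theory.
Set Implicit Arguments. Unset Strict Implicit. Unset Printing Implicit Defensive.

(* A perfect matching of H is the same as an involution m of the nodes of H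
   pairing each node with a neighbour.  Matching y_{e,i} with y_{e,i'} keeps
   the status of e from G'; otherwise y_{e,i} is matched into X_i, e is
   toggled, and its two endpoints pay c_e/2 each, so the matching cost is the
   edit cost of the graph read off from m.  Counting the mates of X^+_i and
   X^-_i gives deg_E(i) = sigma_i - #(Z^+_i used) + #(Z^-_i used), which lies
   in [L_i, R_i].  Conversely, given E, match the y-nodes of toggled edges
   into X_i, pair the rest of X^+_i with X^-_i and then with Z^+_i or Z^-_i;
   the leftover Z-nodes and \hat z form a clique with an even number of nodes. *)

Lemma big_option (T : finType) (R : Type) (idx : R) (op : Monoid.com_law idx)
    (F : option T -> R) :
  \big[op/idx]_(v : option T) F v = op (F None) (\big[op/idx]_(x : T) F (Some x)).
Proof.
rewrite (perm_big (None :: map Some (enum T))) ?big_cons ?big_map ?big_enum //.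
apply: uniq_perm; rewrite ?index_enum_uniq //=.
  by rewrite map_inj_uniq ?enum_uniq ?andbT //; [apply/mapP=> [[]] | move=> x y []].
by case=> [x|]; rewrite mem_index_enum ?in_cons //= (mem_map (@Some_inj _)) mem_enum.
Qed.

Lemma sum_ord_ltn m N : \sum_(k < m) (k < N : nat) = minn N m.
Proof.
elim: m => [|m IHm]; first by rewrite big_ord0 minn0.
by rewrite big_ord_recr /= IHm; case: ltnP => ?; lia.
Qed.

Lemma card_sum_mem {T : finType} (A : {pred T}) : #|A| = \sum_(v : T) (v \in A : nat).
Proof. by rewrite -sum1_card big_mkcond; apply: eq_bigr => v _; case: (v \in A). Qed.

Lemma sum_involution_swap (T : finType) (f : T -> T) (P Q : pred T) :
  involutive f -> \sum_(v : T) (P v && Q (f v) : nat) = \sum_(v : T) (Q v && P (f v) : nat).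
Proof.
by move=> fK; rewrite [RHS](reindex_inj (can_inj fK)); apply: eq_bigr => v _; rewrite fK andbC.
Qed.

Lemma sum_involution_le (T : finType) (f : T -> T) (P Q : pred T) :
  involutive f -> \sum_(v : T) (P v && Q (f v) : nat) <= \sum_(v : T) (Q v : nat).
Proof.
move=> fK; rewrite (sum_involution_swap _ _ fK) leq_sum // => v _.
by case: (Q v); rewrite ?leq_b1.
Qed.

Lemma sum_split3 (T : finType) (P A B C : pred T) :
  (forall v, P v -> A v + B v + C v = 1) ->
  \sum_(v : T) (P v : nat) =
  \sum_(v : T) (P v && A v : nat) + \sum_(v : T) (P v && B v : nat)
    + \sum_(v : T) (P v && C v : nat).
Proof.
by move=> ABC; rewrite -!big_split; apply: eq_bigr => v _; case: (boolP (P v)) => //= /ABC.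
Qed.

Lemma fixfree_involution_card_even (T : finType) (f : T -> T) (S : {set T}) :
  {in S, forall x, [/\ f x \in S, f (f x) = x & f x != x]} -> ~~ odd #|S|.
Proof.
elim: {S}_.+1 {-2}S (ltnSn #|S|) => // N IHN S ltSN fS.
have [->|[x Sx]] := set_0Vmem S; first by rewrite cards0.
have [Sfx ffx fxx] := fS x Sx.
have cardS : #|S| = #|S :\ x :\ f x|.+2.
  by rewrite (cardsD1 x) Sx (cardsD1 (f x) (S :\ x)) !inE fxx Sfx.
rewrite cardS /= negbK IHN //; first by move: ltSN; rewrite cardS; lia.
move=> y; rewrite !inE => /and3P[yfx yx Sy]; have [Sfy ffy fyy] := fS y Sy.
rewrite Sfy ffy fyy andbT; split=> //; apply/andP; split.
  by apply: contra yx => /eqP fyfx; rewrite -ffy fyfx ffx.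
by apply: contra yfx => /eqP fyx; rewrite -ffy fyx.
Qed.

Definition pair_index j := if odd j then j.-1 else j.+1.

Lemma pair_indexK : involutive pair_index.
Proof.
move=> j; rewrite /pair_index; case: (boolP (odd j)) => oj.
  by case: j oj => [|j] //= oj; rewrite (negbTE oj).
by rewrite /= oj.
Qed.

Definition seq_partner (T : eqType) (s : seq T) (x : T) := nth x s (pair_index (index x s)).

Lemma seq_partnerP (T : eqType) (s : seq T) x :
  uniq s -> ~~ odd (size s) -> x \in s ->
  [/\ seq_partner s x \in s, seq_partner s x != x & seq_partner s (seq_partner s x) = x].
Proof.
move=> uniq_s even_s sx; set j := index x s; have ltjs : j < size s by rewrite index_mem.
have ltpjs : pair_index j < size s.
  rewrite /pair_index; case: ifP => oddj; first lia.
  have : j.+1 != size s by apply: contraNneq even_s => <-; rewrite /= oddj.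
  lia.
have indexK : index (seq_partner s x) s = pair_index j by rewrite index_uniq.
split; first exact: mem_nth.
  by apply/eqP => px; move: indexK; rewrite px -/j /pair_index; case: ifP; lia.
rewrite /seq_partner indexK pair_indexK (set_nth_default x) //; exact: nth_index.
Qed.

Lemma deg_sum (m : nat) (E : rel 'I_m) i : deg E i = \sum_(l < m) (E i l : nat).
Proof. by rewrite /deg card_sum_mem; apply: eq_bigr => l _; rewrite inE. Qed.

Lemma deg_le_pred (m : nat) (E : rel 'I_m) i : ~~ E i i -> deg E i <= m.-1.
Proof.
move=> Eii; rewrite -[m in m.-1]card_ord -(cardsC1 i) subset_leq_card //.
by apply/subsetP=> j; rewrite !inE; apply: contraTneq => ->.
Qed.

Section Edits.
Variables (m : nat) (E1 E2 : rel 'I_m).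

Definition edits i := [seq l <- enum 'I_m | ~~ E1 i l && E2 i l].

Lemma edits_uniq i : uniq (edits i).
Proof. exact/filter_uniq/enum_uniq. Qed.

Lemma size_edits i : size (edits i) = \sum_(l < m) (~~ E1 i l && E2 i l : nat).
Proof.
rewrite size_filter -sum1_count big_mkcond big_enum /=.
by apply: eq_bigr => l _; case: (_ && _).
Qed.

Lemma size_edits_le_deg i : size (edits i) <= deg E2 i.
Proof. by rewrite size_edits deg_sum leq_sum // => l _; case: (E1 i l); case: (E2 i l). Qed.

End Edits.

Lemma deg_edits (m : nat) (E1 E2 : rel 'I_m) i :
  deg E2 i + size (edits E2 E1 i) = deg E1 i + size (edits E1 E2 i).
Proof.
rewrite !size_edits !deg_sum -!big_split; apply: eq_bigr => l _.
by case: (E1 i l); case: (E2 i l).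
Qed.

Lemma deg_add_size_edits_le (m : nat) (E1 E2 : rel 'I_m) i :
  ~~ E1 i i -> ~~ E2 i i -> deg E1 i + size (edits E1 E2 i) <= m.-1.
Proof.
move=> E1ii E2ii; have := @deg_le_pred m (fun i l => E1 i l || E2 i l) i.
rewrite negb_or E1ii E2ii => /(_ isT); apply: leq_trans.
rewrite size_edits !deg_sum -big_split leq_sum // => l _.
by case: (E1 i l); case: (E2 i l).
Qed.

Section PerfectMatching.
Variables (T : finType) (V : pred T) (adj : rel T).
Hypothesis adjC : symmetric adj.
Hypothesis adj_edge : forall u v, adj u v -> [&& V u, V v & u != v].

Definition is_perfect_matching (M : {set {set T}}) :=
  (forall e, e \in M -> exists u v, adj u v /\ e = [set u; v]) /\
  (forall v, V v -> #|[set e in M | v \in e]| = 1%N).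

Definition is_mate (m : T -> T) :=
  (forall v, V v -> adj v (m v) /\ m (m v) = v) /\ (forall v, ~~ V v -> m v = v).

Section Mate.
Variable m : T -> T.
Hypothesis mate_m : is_mate m.

Lemma mateK : involutive m.
Proof. by move=> v; case: (boolP (V v)) => [/mate_m.1[] | /mate_m.2 mv]; rewrite ?mv. Qed.

Lemma mate_adj v : V v -> adj v (m v).
Proof. by case/mate_m.1. Qed.

Lemma mate_neq v : V v -> m v != v.
Proof. by move/mate_adj/adj_edge/and3P => [_ _]; rewrite eq_sym. Qed.

Lemma mate_in v : V (m v) = V v.
Proof.
case Vv: (V v); first by have /and3P[] := adj_edge (mate_adj Vv).
by rewrite mate_m.2 ?Vv.
Qed.

Lemma sum_mate (R : nmodType) (F : T -> R) :
  (\sum_(v | V v) F (m v) = \sum_(v | V v) F v)%R.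
Proof. by rewrite [RHS](reindex_inj (can_inj mateK)); apply: eq_bigl => v; rewrite mate_in. Qed.

End Mate.

Section FromMatching.
Variable M : {set {set T}}.
Hypothesis PM : is_perfect_matching M.

Lemma matching_edge_in e u : e \in M -> u \in e -> V u.
Proof.
move=> eM; have [a [b [ab ->]]] := PM.1 e eM; have /and3P[Va Vb _] := adj_edge ab.
by rewrite !inE => /pred2P[] ->.
Qed.

Lemma matching_edge_unique v e1 e2 :
  e1 \in M -> v \in e1 -> e2 \in M -> v \in e2 -> e1 = e2.
Proof.
move=> e1M ve1 e2M ve2; have /eqP/cards1P[e0 Me0] := PM.2 v (matching_edge_in e1M ve1).
have : e1 \in [set e in M | v \in e] by rewrite inE e1M ve1.
have : e2 \in [set e in M | v \in e] by rewrite inE e2M ve2.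
by rewrite Me0 !inE => /eqP -> /eqP ->.
Qed.

Lemma matching_edge_exists v : V v -> exists w, adj v w /\ [set v; w] \in M.
Proof.
move=> Vv; have /eqP/cards1P[e Me] := PM.2 v Vv.
have : e \in [set e in M | v \in e] by rewrite Me set11.
rewrite inE => /andP[eM]; have [a [b [ab eab]]] := PM.1 e eM.
rewrite eab !inE => /pred2P[] ->; first by exists b; rewrite -eab.
by exists a; rewrite adjC setUC -eab.
Qed.

Definition matching_mate v := odflt v [pick w | adj v w && ([set v; w] \in M)].

Lemma matching_mateE v w : adj v w -> [set v; w] \in M -> matching_mate v = w.
Proof.
move=> vw vwM; rewrite /matching_mate; case: pickP => [w' /andP[vw' vw'M] | /(_ w)].
  have := matching_edge_unique vw'M (set21 _ _) vwM (set21 _ _).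
  move/setP/(_ w'); rewrite !inE eqxx orbT eq_sym.
  by have /and3P[_ _ /negbTE ->] := adj_edge vw' => /esym/eqP.
by rewrite vw vwM.
Qed.

Lemma matching_mateP : is_mate matching_mate.
Proof.
split=> [v Vv | v Vv].
  have [w [vw vwM]] := matching_edge_exists Vv; rewrite (matching_mateE vw vwM).
  by split=> //; apply: matching_mateE; rewrite 1?adjC 1?setUC.
rewrite /matching_mate; case: pickP => [w /andP[vw _] | //].
by have /and3P[] := adj_edge vw; rewrite (negbTE Vv).
Qed.

Lemma matching_edgeE e u : e \in M -> u \in e -> e = [set u; matching_mate u].
Proof.
move=> eM ue; have Vu := matching_edge_in eM ue.
have [w [uw uwM]] := matching_edge_exists Vu.
by rewrite (matching_mateE uw uwM); apply: matching_edge_unique eM ue uwM (set21 _ _).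
Qed.

End FromMatching.

Definition mate_matching (m : T -> T) := [set [set v; m v] | v in V].

Lemma mate_matching_edgeE m :
  is_mate m -> forall e u, e \in mate_matching m -> u \in e -> e = [set u; m u].
Proof.
by move=> mate_m e u /imsetP[v _ ->]; rewrite !inE => /pred2P[] ->; rewrite ?mateK // setUC.
Qed.

Lemma mate_matchingP m : is_mate m -> is_perfect_matching (mate_matching m).
Proof.
move=> mate_m; split=> [e /imsetP[v Vv ->] | w Vw].
  by exists v, (m v); rewrite mate_adj.
apply/eqP/cards1P; exists [set w; m w]; apply/setP => e; rewrite !inE.
apply/andP/eqP => [[eM we] | ->]; first exact: mate_matching_edgeE mate_m _ _ eM we.
by rewrite set21; split=> //; apply/imsetP; exists w.
Qed.

Lemma sum_matching_weight (R : nmodType) M m (F : T -> T -> R) :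
  is_perfect_matching M -> is_mate m ->
  (forall e u, e \in M -> u \in e -> e = [set u; m u]) ->
  (\sum_(e in M) \sum_(u in e) \sum_(v in e | u != v) F u v = \sum_(u | V u) F u (m u))%R.
Proof.
move=> PM mate_m edgeE.
have trivM : trivIset M.
  apply/trivIsetP => A B AM BM; apply: contraNT => /pred0Pn[x /andP[xA xB]].
  by rewrite (matching_edge_unique PM AM xA BM xB).
transitivity (\sum_(e in M) \sum_(u in e) F u (m u))%R.
  apply: eq_bigr => e eM; apply: eq_bigr => u ue.
  have mu_neq := mate_neq mate_m (matching_edge_in PM eM ue).
  rewrite (edgeE e u eM ue); apply: big_pred1 => v; rewrite !inE.
  by case: (eqVneq v u) => [-> | _] /=; rewrite ?andbT // eq_sym (negbTE mu_neq).
rewrite -(big_trivIset _ trivM); apply: eq_bigl => u.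
apply/bigcupP/idP => [[e eM ue] | Vu]; first exact: (matching_edge_in PM eM ue).
by have [w [_ uwM]] := matching_edge_exists PM Vu; exists [set u; w]; rewrite ?set21.
Qed.

End PerfectMatching.

Variant kind_spec : 'I_5 -> Type :=
  | KindY : kind_spec kY
  | KindXp : kind_spec kXp
  | KindXm : kind_spec kXm
  | KindZp : kind_spec kZp
  | KindZm : kind_spec kZm.

Lemma kindP t : kind_spec t.
Proof.
by case: t => [[|[|[|[|[|t]]]]] lt5] //; rewrite (bool_irrelevance lt5 isT); constructor.
Qed.

Section Construction.
Variables (n : nat) (E' : rel 'I_n) (lo hi : 'I_n -> nat).
Hypothesis E'_simple : simple_graph E'.

Local Notation node := (node n).
Local Notation inH := (inH E' lo hi).
Local Notation adjH := (adjH E' lo hi).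
Local Notation nXp := (nXp E' hi).
Local Notation nXm := (nXm E' lo).
Local Notation nZp := (nZp E' lo hi).
Local Notation nZm := (nZm E' lo hi).
Local Notation sigma := (sigma E' lo hi).

Definition ynode i l : node := Some (kY, i, l).
Definition xpnode i k : node := Some (kXp, i, k).
Definition xmnode i k : node := Some (kXm, i, k).
Definition zpnode i k : node := Some (kZp, i, k).
Definition zmnode i k : node := Some (kZm, i, k).

Lemma big_node (R : Type) (idx : R) (op : Monoid.com_law idx) (F : node -> R) :
  \big[op/idx]_(v : node) F v =
  op (F None)
     (\big[op/idx]_(t < 5) \big[op/idx]_(i < n) \big[op/idx]_(k < n) F (Some (t, i, k))).
Proof.
by rewrite big_option pair_big /= pair_big; congr (op _ _); apply: eq_bigr => -[[]].
Qed.

Lemma big_node_block (R : Type) (idx : R) (op : Monoid.com_law idx) (F : node -> R)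
    t0 i0 :
  (forall t i k, (t, i) != (t0, i0) -> F (Some (t, i, k)) = idx) -> F None = idx ->
  \big[op/idx]_(v : node) F v = \big[op/idx]_(k < n) F (Some (t0, i0, k)).
Proof.
move=> Fout FNone; rewrite big_node FNone Monoid.mul1m (bigD1 t0) //=.
rewrite [X in op _ X]big1 => [|t tt0]; last first.
  by apply: big1 => i _; apply: big1 => k _; rewrite Fout // xpair_eqE (negbTE tt0).
rewrite Monoid.mulm1 (bigD1 i0) //= [X in op _ X]big1 ?Monoid.mulm1 // => i ii0.
by apply: big1 => k _; rewrite Fout // xpair_eqE eqxx (negbTE ii0).
Qed.

Lemma adjHC : symmetric adjH.
Proof. by move=> u v; rewrite /adjH eq_sym orbC; case: (inH u); case: (inH v). Qed.

Lemma adjH_edge u v : adjH u v -> [&& inH u, inH v & u != v].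
Proof. by case/and4P=> -> -> ->. Qed.

Lemma adjH_ynodeP i l w : adjH (ynode i l) w ->
  [\/ w = ynode l i, exists2 k, w = xpnode i k & ~~ E' i l
    | exists2 k, w = xmnode i k & E' i l].
Proof.
case/and4P=> _ _ _; case: w => [[[s j] k]|] //=; case: (kindP s) => /=; rewrite ?orbF //.
- by move=> /orP[] /andP[/eqP-> /eqP->]; apply: Or31.
- by case/andP=> /eqP<- ?; apply: Or32; exists k.
- by case/andP=> /eqP<- ?; apply: Or33; exists k.
Qed.

Lemma adjH_xpnodeP i k w : adjH (xpnode i k) w ->
  [\/ exists2 l, w = ynode i l & ~~ E' i l, exists k', w = xmnode i k'
    | exists k', w = zpnode i k'].
Proof.
case/and4P=> _ _ _; case: w => [[[s j] l]|] //=; case: (kindP s) => /=; rewrite ?orbF //.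
- by case/andP=> /eqP-> ?; apply: Or31; exists l.
- by move/eqP->; apply: Or32; exists l.
- by move/eqP<-; apply: Or33; exists l.
Qed.

Lemma adjH_xmnodeP i k w : adjH (xmnode i k) w ->
  [\/ exists2 l, w = ynode i l & E' i l, exists k', w = xpnode i k'
    | exists k', w = zmnode i k'].
Proof.
case/and4P=> _ _ _; case: w => [[[s j] l]|] //=; case: (kindP s) => /=; rewrite ?orbF //.
- by case/andP=> /eqP-> ?; apply: Or31; exists l.
- by move/eqP<-; apply: Or32; exists l.
- by move/eqP<-; apply: Or33; exists l.
Qed.

Lemma adjH_yy i l : i != l -> adjH (ynode i l) (ynode l i).
Proof.
move=> il; rewrite /adjH /= il eq_sym il !eqxx /= andbT.
by apply/eqP=> -[/eqP]; rewrite (negbTE il).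
Qed.

Lemma adjH_xpy i (k l : 'I_n) :
  k < nXp i -> i != l -> ~~ E' i l -> adjH (xpnode i k) (ynode i l).
Proof. by move=> lt_k il nE'il; rewrite /adjH /= lt_k il nE'il !eqxx. Qed.

Lemma adjH_xmy i (k l : 'I_n) :
  k < nXm i -> i != l -> E' i l -> adjH (xmnode i k) (ynode i l).
Proof. by move=> lt_k il E'il; rewrite /adjH /= lt_k il E'il !eqxx. Qed.

Lemma adjH_xpxm i (k k' : 'I_n) :
  k < nXp i -> k' < nXm i -> adjH (xpnode i k) (xmnode i k').
Proof. by move=> lt_k lt_k'; rewrite /adjH /= lt_k lt_k' !eqxx. Qed.

Lemma adjH_zpxp i (k k' : 'I_n) :
  k < nZp i -> k' < nXp i -> adjH (zpnode i k) (xpnode i k').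
Proof. by move=> lt_k lt_k'; rewrite /adjH /= lt_k lt_k' !eqxx. Qed.

Lemma adjH_zmxm i (k k' : 'I_n) :
  k < nZm i -> k' < nXm i -> adjH (zmnode i k) (xmnode i k').
Proof. by move=> lt_k lt_k'; rewrite /adjH /= lt_k lt_k' !eqxx. Qed.

Definition in_block t0 i (v : node) : bool :=
  if v is Some (t, j, _) then [&& t == t0, j == i & inH v] else false.

Lemma sum_in_block t0 i N :
  N <= n -> (forall k : 'I_n, inH (Some (t0, i, k)) = (k < N)) ->
  \sum_(v : node) in_block t0 i v = N.
Proof.
move=> le_Nn inH_block; rewrite (@big_node_block _ _ _ _ t0 i) //; last first.
  by move=> t j k; rewrite xpair_eqE /= andbA => /negbTE ->.
rewrite (eq_bigr (fun k : 'I_n => k < N : nat)) => [|k _].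
  by rewrite sum_ord_ltn; apply/minn_idPl.
by rewrite -inH_block /= !eqxx.
Qed.

Lemma dG_le i : dG E' i <= n.-1.
Proof. exact/deg_le_pred/E'_simple.2. Qed.

Hypothesis D_bounds : forall i, lo i <= hi i <= n.-1.

Lemma sigma_bounds i : lo i <= sigma i <= hi i.
Proof. by have := dG_le i; have := D_bounds i; rewrite /sigma /nXp /nXm; lia. Qed.

Lemma block_sizes_le i : [/\ nXp i <= n, nXm i <= n, nZp i <= n & nZm i <= n].
Proof.
have := sigma_bounds i; have := dG_le i; have := D_bounds i.
by rewrite /nZp /nZm /nXp /nXm; split; lia.
Qed.

Lemma sum_block_xp i : \sum_(v : node) in_block kXp i v = nXp i.
Proof. by have [le _ _ _] := block_sizes_le i; apply: sum_in_block. Qed.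

Lemma sum_block_xm i : \sum_(v : node) in_block kXm i v = nXm i.
Proof. by have [_ le _ _] := block_sizes_le i; apply: sum_in_block. Qed.

Lemma sum_block_zp i : \sum_(v : node) in_block kZp i v = nZp i.
Proof. by have [_ _ le _] := block_sizes_le i; apply: sum_in_block. Qed.

Lemma sum_block_zm i : \sum_(v : node) in_block kZm i v = nZm i.
Proof. by have [_ _ _ le] := block_sizes_le i; apply: sum_in_block. Qed.

End Construction.

Lemma sum_upper_half (R : numFieldType) (m : nat) (f : 'I_m -> 'I_m -> R) :
  (forall i j, f i j = f j i) -> (forall i, f i i = 0%R) ->
  (\sum_(i < m) \sum_(j < m | (i < j)%N) f i j = (\sum_(i < m) \sum_(j < m) f i j) / 2)%R.
Proof.
move=> f_sym f_diag; apply: (canRL (mulfK _)); rewrite ?pnatr_eq0 // mulr_natr mulr2n.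
have lower (i : 'I_m) : (\sum_(j < m | ~~ (i < j)%N) f i j = \sum_(j < m | (j < i)%N) f i j)%R.
  rewrite big_mkcond [RHS]big_mkcond; apply: eq_bigr => j _; rewrite -leqNgt leq_eqVlt.
  by case: eqVneq => [/val_inj->|] //=; rewrite ltnn f_diag.
under [RHS]eq_bigr => i _ do rewrite (bigID (fun j : 'I_m => (i < j)%N)) /= lower.
rewrite big_split /=; congr (_ + _)%R.
rewrite [RHS](eq_bigr _ (fun i _ => big_mkcond _ _)) exchange_big /=.
by apply: eq_bigr => i _; rewrite big_mkcond; apply: eq_bigr => j _; rewrite f_sym.
Qed.

Section Cost.
Variables (n : nat) (E' : rel 'I_n) (lo hi : 'I_n -> nat).
Hypothesis E'_simple : simple_graph E'.
Variables (R : realFieldType) (c : 'I_n -> 'I_n -> R).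
Hypothesis c_sym : forall i j, c i j = c j i.

Local Notation node := (node n).
Local Notation inH := (inH E' lo hi).
Local Notation adjH := (adjH E' lo hi).
Local Notation costH := (costH E' lo hi c).
Local Open Scope ring_scope.

Definition isY (w : node) := if w is Some (t, _, _) then t == kY else false.

(* The cost c_e/2 of an edge between y_{e,i} and X_i is charged to y_{e,i}. *)
Definition ypay (u w : node) : R :=
  if u is Some (t, i, l) then if (t == kY) && ~~ isY w then c i l / 2 else 0 else 0.

Lemma cost0_adjH a b : adjH a b -> cost0 c a b = ypay b a.
Proof.
case/and4P=> _ _ _; case: a => [[[t i] k]|]; case: b => [[[s j] l]|] //=.
all: try case: (kindP t); try case: (kindP s); move=> //=.
all: by rewrite !orbF => /andP[/eqP-> _]; rewrite eqxx.
Qed.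
Lemma costH_mate m u : is_mate inH adjH m -> inH u ->
  costH u (m u) = ypay u (m u) + ypay (m u) u.
Proof.
move=> mate_m inHu; have adj_um := mate_adj mate_m inHu.
have adj_mu : adjH (m u) u by rewrite adjHC.
by rewrite /costH adj_um (cost0_adjH adj_um) (cost0_adjH adj_mu) addrC.
Qed.

Lemma sum_costH_mate m : is_mate inH adjH m ->
  \sum_(u | inH u) costH u (m u) / 2 = \sum_(u | inH u) ypay u (m u).
Proof.
move=> mate_m; under eq_bigr => u inHu do rewrite costH_mate // mulrDl.
rewrite big_split /=.
have -> : \sum_(u | inH u) ypay (m u) u / 2 = \sum_(u | inH u) ypay u (m u) / 2.
  rewrite -(sum_mate (@adjH_edge n E' lo hi) mate_m (fun u => ypay u (m u) / 2)).
  by apply: eq_bigr => u _; rewrite (mateK mate_m).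
by rewrite -big_split; apply: eq_bigr => u _ /=; rewrite -splitr.
Qed.

Lemma sum_ypay_edit m E : simple_graph E ->
  (forall i l, ~~ isY (m (ynode i l)) = (E i l != E' i l)) ->
  \sum_(u | inH u) ypay u (m u) = edit_cost E' c E.
Proof.
move=> [E_sym E_irr] flip; pose f i l := if E i l != E' i l then c i l else 0.
have f_sym i l : f i l = f l i by rewrite /f E_sym E'_simple.1 c_sym.
have f_diag i : f i i = 0 by rewrite /f (negbTE (E_irr i)) (negbTE (E'_simple.2 i)).
rewrite /edit_cost (eq_bigr (fun i : 'I_n => \sum_(j < n | (i < j)%N) f i j)); last first.
  by move=> i _; rewrite big_mkcondr.
rewrite sum_upper_half // mulr_suml big_mkcond big_node /= if_same add0r.
rewrite (bigD1 kY) //= [X in _ + X]big1 ?addr0 => [|t tY]; last first.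
  by apply: big1 => i _; apply: big1 => k _; rewrite /ypay (negbTE tY) if_same.
apply: eq_bigr => i _; rewrite mulr_suml; apply: eq_bigr => l _.
case: eqVneq => [<- | _]; first by rewrite f_diag mul0r.
by rewrite -[Some _]/(ynode i l) flip /f; case: ifP; rewrite ?mul0r.
Qed.

Lemma matching_cost_edit M m E : simple_graph E ->
  perfect_matching E' lo hi M -> is_mate inH adjH m ->
  (forall e u, e \in M -> u \in e -> e = [set u; m u]) ->
  (forall i l, ~~ isY (m (ynode i l)) = (E i l != E' i l)) ->
  matching_cost E' lo hi c M = edit_cost E' c E.
Proof.
move=> E_simple PM mate_m edgeE flip.
rewrite -(sum_ypay_edit E_simple flip) -sum_costH_mate //.
exact: (sum_matching_weight (@adjHC n E' lo hi) (@adjH_edge n E' lo hi)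
  (fun u v => costH u v / 2) PM mate_m edgeE).
Qed.

End Cost.

Section MatchingToGraph.
Variables (n : nat) (E' : rel 'I_n) (lo hi : 'I_n -> nat).
Hypothesis E'_simple : simple_graph E'.
Hypothesis D_bounds : forall i, lo i <= hi i <= n.-1.

Local Notation node := (node n).
Local Notation inH := (inH E' lo hi).
Local Notation adjH := (adjH E' lo hi).
Local Notation block := (in_block E' lo hi).

Variable m : node -> node.
Hypothesis mate_m : is_mate inH adjH m.

Lemma mate_ynode_diag i : m (ynode i i) = ynode i i.
Proof. by apply: mate_m.2; rewrite /= eqxx. Qed.

Lemma mate_ynodeP i l : i != l ->
  [\/ m (ynode i l) = ynode l i, exists2 k, m (ynode i l) = xpnode i k & ~~ E' i l
    | exists2 k, m (ynode i l) = xmnode i k & E' i l].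
Proof. by move=> il; apply/adjH_ynodeP/(mate_adj mate_m). Qed.

Lemma isY_mate_sym i l : isY (m (ynode i l)) = isY (m (ynode l i)).
Proof.
wlog suff: i l / isY (m (ynode i l)) -> isY (m (ynode l i)).
  by move=> imp; apply/idP/idP; apply: imp.
have [<- // | il] := eqVneq i l.
by case: (mate_ynodeP il) => [<- _ | [k ->] | [k ->]] //; rewrite (mateK mate_m).
Qed.

(* With e = {i,l}: e keeps its status in G' iff y_{e,i} is matched to y_{e,l}. *)
Definition mate_graph i l := (i != l) && (isY (m (ynode i l)) == E' i l).

Lemma mate_graph_simple : simple_graph mate_graph.
Proof.
split=> [i l | i]; last by rewrite /mate_graph eqxx.
by rewrite /mate_graph eq_sym isY_mate_sym E'_simple.1.
Qed.

Lemma mate_graph_flip i l : ~~ isY (m (ynode i l)) = (mate_graph i l != E' i l).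
Proof.
have [<- | il] := eqVneq i l.
  by rewrite mate_ynode_diag /mate_graph eqxx (negbTE (E'_simple.2 i)).
by rewrite /mate_graph il; case: (isY _); case: (E' i l).
Qed.

Lemma block_xp_mate_ynode i j l :
  block kXp i (m (ynode j l)) = [&& j == i, ~~ E' j l & ~~ isY (m (ynode j l))].
Proof.
have [<- | jl] := eqVneq j l; first by rewrite mate_ynode_diag /= !andbF.
have := mate_in (@adjH_edge _ _ _ _) mate_m (ynode j l); rewrite /= jl.
case: (mate_ynodeP jl) => [-> | [k -> nE'] | [k -> E'jl]] //= inHm.
- by rewrite !andbF.
- by rewrite nE' inHm.
- by rewrite E'jl !andbF.
Qed.

Lemma block_xm_mate_ynode i j l :
  block kXm i (m (ynode j l)) = [&& j == i, E' j l & ~~ isY (m (ynode j l))].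
Proof.
have [<- | jl] := eqVneq j l; first by rewrite mate_ynode_diag /= !andbF.
have := mate_in (@adjH_edge _ _ _ _) mate_m (ynode j l); rewrite /= jl.
case: (mate_ynodeP jl) => [-> | [k -> nE'] | [k -> E'jl]] //= inHm.
- by rewrite !andbF.
- by rewrite (negbTE nE') !andbF.
- by rewrite E'jl inHm.
Qed.

Lemma sum_ynode_mate_block t (Q : bool -> bool) i :
  (forall j l,
     block t i (m (ynode j l)) = [&& j == i, Q (E' j l) & ~~ isY (m (ynode j l))]) ->
  \sum_(v : node) (isY v && block t i (m v)) =
  \sum_(l < n) (Q (E' i l) && ~~ isY (m (ynode i l))).
Proof.
move=> block_mate; rewrite (@big_node_block _ _ _ _ _ kY i) => [|s j l | //].
  by apply: eq_bigr => l _; rewrite -[Some _]/(ynode i l) block_mate eqxx.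
rewrite xpair_eqE /=; case: (eqVneq s kY) => [-> /= ji | //].
by rewrite -[Some _]/(ynode j l) block_mate (negbTE ji).
Qed.

Lemma sum_xp_mate_ynode i :
  \sum_(v : node) (block kXp i v && isY (m v)) = size (edits E' mate_graph i).
Proof.
rewrite (sum_involution_swap _ _ (mateK mate_m)) (@sum_ynode_mate_block _ negb).
  rewrite size_edits; apply: eq_bigr => l _.
  by rewrite mate_graph_flip; case: (E' i l); case: (mate_graph i l).
exact: block_xp_mate_ynode.
Qed.

Lemma sum_xm_mate_ynode i :
  \sum_(v : node) (block kXm i v && isY (m v)) = size (edits mate_graph E' i).
Proof.
rewrite (sum_involution_swap _ _ (mateK mate_m)) (@sum_ynode_mate_block _ id).
  rewrite size_edits; apply: eq_bigr => l _.
  by rewrite mate_graph_flip; case: (E' i l); case: (mate_graph i l).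
exact: block_xm_mate_ynode.
Qed.

Lemma xp_mate_split i v : block kXp i v ->
  isY (m v) + block kXm i (m v) + block kZp i (m v) = 1.
Proof.
case: v => [[[t j] k]|] // /and3P[/eqP-> /eqP-> inHv].
have adj_v := mate_adj mate_m inHv; have /and3P[_ inHm _] := adjH_edge adj_v.
case: (adjH_xpnodeP adj_v) => [[l -> _] | [k' mv] | [k' mv]] //; rewrite mv in inHm *.
all: by rewrite /= !eqxx; move: inHm => /= ->.
Qed.

Lemma xm_mate_split i v : block kXm i v ->
  isY (m v) + block kXp i (m v) + block kZm i (m v) = 1.
Proof.
case: v => [[[t j] k]|] // /and3P[/eqP-> /eqP-> inHv].
have adj_v := mate_adj mate_m inHv; have /and3P[_ inHm _] := adjH_edge adj_v.
case: (adjH_xmnodeP adj_v) => [[l -> _] | [k' mv] | [k' mv]] //; rewrite mv in inHm *.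
all: by rewrite /= !eqxx; move: inHm => /= ->.
Qed.

Lemma deg_mate_graph i : lo i <= deg mate_graph i <= hi i.
Proof.
have splitXp := sum_split3 (@xp_mate_split i).
have splitXm := sum_split3 (@xm_mate_split i).
rewrite sum_block_xp // sum_xp_mate_ynode in splitXp.
rewrite sum_block_xm // sum_xm_mate_ynode in splitXm.
have XpXm := sum_involution_swap (block kXp i) (block kXm i) (mateK mate_m).
have ZpXp := sum_involution_le (block kXp i) (block kZp i) (mateK mate_m).
have ZmXm := sum_involution_le (block kXm i) (block kZm i) (mateK mate_m).
rewrite sum_block_zp // in ZpXp; rewrite sum_block_zm // in ZmXm.
have := deg_edits E' mate_graph i; have := sigma_bounds E'_simple D_bounds i.
move: ZpXp ZmXm; rewrite /nZp /nZm /sigma /dG; lia.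
Qed.

End MatchingToGraph.

Section GraphToMatching.
Variables (n : nat) (E' : rel 'I_n) (lo hi : 'I_n -> nat).
Hypothesis E'_simple : simple_graph E'.
Hypothesis D_bounds : forall i, lo i <= hi i <= n.-1.
Variable E : rel 'I_n.
Hypothesis E_simple : simple_graph E.
Hypothesis deg_E : forall i, lo i <= deg E i <= hi i.

Local Notation node := (node n).
Local Notation inH := (inH E' lo hi).
Local Notation adjH := (adjH E' lo hi).
Local Notation nXp := (nXp E' hi).
Local Notation nXm := (nXm E' lo).
Local Notation nZp := (nZp E' lo hi).
Local Notation nZm := (nZm E' lo hi).

(* X^+_i is laid out as: mates of the y^+ of the added edges at i, then mates of
   X^-_i, then mates of Z^+_i; symmetrically for X^-_i with the removed edges.
   The unused nodes of Z^+_i, Z^-_i and \hat z form a clique. *)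
Definition n_added i := size (edits E' E i).
Definition n_removed i := size (edits E E' i).
Definition n_xx i := minn (nXp i - n_added i) (nXm i - n_removed i).
Definition n_zp i := nXp i - n_added i - n_xx i.
Definition n_zm i := nXm i - n_removed i - n_xx i.

Lemma layout_sizes i :
  [/\ n_removed i <= nXm i, n_added i <= nXp i, n_zp i <= nZp i & n_zm i <= nZm i].
Proof.
have [E_irr E'_irr] := (E_simple.2 i, E'_simple.2 i).
have := deg_edits E' E i; have := size_edits_le_deg E E' i; have := size_edits_le_deg E' E i.
have := deg_add_size_edits_le E'_irr E_irr; have := deg_add_size_edits_le E_irr E'_irr.
have := deg_E i; have := D_bounds i; have := sigma_bounds E'_simple D_bounds i.
rewrite /n_zp /n_zm /n_xx /n_added /n_removed /nZp /nZm /sigma /nXp /nXm /dG.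
by split; lia.
Qed.

(* [insubd i k] is a junk index when [n <= k]; [node_at] is only used with [k < n]. *)
Definition node_at t i (k : nat) : node := Some (t, i, insubd i k).

Lemma node_atE t i (k : 'I_n) : node_at t i k = Some (t, i, k).
Proof. by rewrite /node_at valKd. Qed.

Lemma node_at_val t i k :
  k < n -> exists2 k' : 'I_n, node_at t i k = Some (t, i, k') & val k' = k.
Proof. by move=> lt_kn; exists (insubd i k); rewrite ?val_insubd ?lt_kn. Qed.

Definition mate0 (v : node) : node :=
  match v with
  | Some (t, i, k) =>
    if t == kY then
      if E i k == E' i k then ynode k i
      else if E' i k then node_at kXm i (index k (edits E E' i))
      else node_at kXp i (index k (edits E' E i))
    else if t == kXp then
      if k < n_added i then ynode i (nth i (edits E' E i) k)
      else if k < n_added i + n_xx i then node_at kXm i (k - n_added i + n_removed i)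
      else node_at kZp i (k - n_added i - n_xx i)
    else if t == kXm then
      if k < n_removed i then ynode i (nth i (edits E E' i) k)
      else if k < n_removed i + n_xx i then node_at kXp i (k - n_removed i + n_added i)
      else node_at kZm i (k - n_removed i - n_xx i)
    else if t == kZp then node_at kXp i (k + n_added i + n_xx i)
    else node_at kXm i (k + n_removed i + n_xx i)
  | None => None
  end.

Definition spare (v : node) : bool :=
  if v is Some (t, i, k) then ((t == kZp) && (n_zp i <= k)) || ((t == kZm) && (n_zm i <= k))
  else true.

Definition paired (v : node) := inH v && ~~ spare v.

Lemma paired_ynode i l : paired (ynode i l) = (i != l).
Proof. by rewrite /paired /= andbT. Qed.

Lemma paired_xpnode i k : paired (xpnode i k) = (k < nXp i).
Proof. by rewrite /paired /= andbT. Qed.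

Lemma paired_xmnode i k : paired (xmnode i k) = (k < nXm i).
Proof. by rewrite /paired /= andbT. Qed.

Lemma paired_zpnode i k : paired (zpnode i k) = (k < nZp i) && (k < n_zp i).
Proof. by rewrite /paired /= ?orbF -ltnNge. Qed.

Lemma paired_zmnode i k : paired (zmnode i k) = (k < nZm i) && (k < n_zm i).
Proof. by rewrite /paired /= ?orbF -ltnNge. Qed.

Lemma mate0_ynodeE i l : mate0 (ynode i l) =
  if E i l == E' i l then ynode l i
  else if E' i l then node_at kXm i (index l (edits E E' i))
  else node_at kXp i (index l (edits E' E i)).
Proof. by []. Qed.

Lemma mate0_xpnodeE i (k : 'I_n) : mate0 (xpnode i k) =
  if k < n_added i then ynode i (nth i (edits E' E i) k)
  else if k < n_added i + n_xx i then node_at kXm i (k - n_added i + n_removed i)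
  else node_at kZp i (k - n_added i - n_xx i).
Proof. by []. Qed.

Lemma mate0_xmnodeE i (k : 'I_n) : mate0 (xmnode i k) =
  if k < n_removed i then ynode i (nth i (edits E E' i) k)
  else if k < n_removed i + n_xx i then node_at kXp i (k - n_removed i + n_added i)
  else node_at kZm i (k - n_removed i - n_xx i).
Proof. by []. Qed.

Lemma mate0_zpnodeE i (k : 'I_n) :
  mate0 (zpnode i k) = node_at kXp i (k + n_added i + n_xx i).
Proof. by []. Qed.

Lemma mate0_zmnodeE i (k : 'I_n) :
  mate0 (zmnode i k) = node_at kXm i (k + n_removed i + n_xx i).
Proof. by []. Qed.

Lemma mate0_ynode i l : i != l ->
  [/\ paired (mate0 (ynode i l)), mate0 (mate0 (ynode i l)) = ynode i l
    & adjH (ynode i l) (mate0 (ynode i l))].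
Proof.
move=> il; rewrite mate0_ynodeE.
have [E_E' | E_E'] := eqVneq (E i l) (E' i l).
  rewrite paired_ynode eq_sym il mate0_ynodeE E_simple.1 E'_simple.1 E_E' eqxx.
  by split=> //; apply: adjH_yy.
have [rem_le add_le _ _] := layout_sizes i.
have [leXp leXm _ _] := block_sizes_le E'_simple D_bounds i.
have Eil : E i l = ~~ E' i l by move: E_E'; case: (E i l); case: (E' i l).
case E'il: (E' i l); rewrite E'il /= in Eil.
  have l_rem : l \in edits E E' i by rewrite mem_filter mem_enum Eil E'il.
  have lt_idx : index l (edits E E' i) < n_removed i by rewrite index_mem.
  have [k -> val_k] := node_at_val kXm i (leq_trans lt_idx (leq_trans rem_le leXm)).
  rewrite -/(xmnode i k) paired_xmnode mate0_xmnodeE val_k (leq_trans lt_idx rem_le) lt_idx.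
  rewrite nth_index //; split=> //; rewrite adjHC.
  by apply: adjH_xmy; rewrite ?val_k ?(leq_trans lt_idx rem_le).
have l_add : l \in edits E' E i by rewrite mem_filter mem_enum Eil E'il.
have lt_idx : index l (edits E' E i) < n_added i by rewrite index_mem.
have [k -> val_k] := node_at_val kXp i (leq_trans lt_idx (leq_trans add_le leXp)).
rewrite -/(xpnode i k) paired_xpnode mate0_xpnodeE val_k (leq_trans lt_idx add_le) lt_idx.
rewrite nth_index //; split=> //; rewrite adjHC.
by apply: adjH_xpy; rewrite ?val_k ?(leq_trans lt_idx add_le) ?E'il.
Qed.

Lemma n_xx_le i : n_xx i <= nXp i - n_added i /\ n_xx i <= nXm i - n_removed i.
Proof. by rewrite /n_xx; lia. Qed.

Lemma mate0_xpnode i (k : 'I_n) : k < nXp i ->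
  [/\ paired (mate0 (xpnode i k)), mate0 (mate0 (xpnode i k)) = xpnode i k
    & adjH (xpnode i k) (mate0 (xpnode i k))].
Proof.
move=> lt_k; have [rem_le add_le zp_le _] := layout_sizes i.
have [leXp leXm leZp _] := block_sizes_le E'_simple D_bounds i; have := n_xx_le i.
rewrite mate0_xpnodeE; case: (ltnP k (n_added i)) => [lt_ka | le_ak] xx_le.
  have : nth i (edits E' E i) k \in edits E' E i by apply: mem_nth.
  set l := nth i _ k; rewrite mem_filter mem_enum andbT => /andP[nE'il Eil].
  have il : i != l by apply: contraTneq Eil => <-; rewrite (negbTE (E_simple.2 i)).
  rewrite paired_ynode il mate0_ynodeE Eil (negbTE nE'il) /=.
  rewrite index_uniq ?edits_uniq //.
  by rewrite node_atE; split=> //; apply: adjH_xpy.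
case: (ltnP k (n_added i + n_xx i)) => [lt_kx | le_xk].
  have lt_k' : k - n_added i + n_removed i < nXm i by lia.
  have [k' -> val_k'] := node_at_val kXm i (leq_trans lt_k' leXm).
  rewrite -/(xmnode i k') paired_xmnode mate0_xmnodeE val_k' lt_k' ltnNge leq_addl /=.
  rewrite ifT; last by lia.
  have -> : k - n_added i + n_removed i - n_removed i + n_added i = k by lia.
  by rewrite node_atE; split=> //; apply: adjH_xpxm; rewrite ?val_k'.
have lt_k' : k - n_added i - n_xx i < n_zp i by rewrite /n_zp; lia.
have [k' -> val_k'] := node_at_val kZp i (leq_trans lt_k' (leq_trans zp_le leZp)).
rewrite -/(zpnode i k') paired_zpnode mate0_zpnodeE val_k' lt_k' (leq_trans lt_k' zp_le).
have -> : k - n_added i - n_xx i + n_added i + n_xx i = k by lia.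
rewrite node_atE; split=> //; rewrite adjHC.
by apply: adjH_zpxp; rewrite ?val_k' ?(leq_trans lt_k' zp_le).
Qed.

Lemma mate0_xmnode i (k : 'I_n) : k < nXm i ->
  [/\ paired (mate0 (xmnode i k)), mate0 (mate0 (xmnode i k)) = xmnode i k
    & adjH (xmnode i k) (mate0 (xmnode i k))].
Proof.
move=> lt_k; have [rem_le add_le _ zm_le] := layout_sizes i.
have [leXp leXm _ leZm] := block_sizes_le E'_simple D_bounds i; have := n_xx_le i.
rewrite mate0_xmnodeE; case: (ltnP k (n_removed i)) => [lt_kr | le_rk] xx_le.
  have : nth i (edits E E' i) k \in edits E E' i by apply: mem_nth.
  set l := nth i _ k; rewrite mem_filter mem_enum andbT => /andP[nEil E'il].
  have il : i != l by apply: contraTneq E'il => <-; rewrite (negbTE (E'_simple.2 i)).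
  rewrite paired_ynode il mate0_ynodeE E'il (negbTE nEil) /= index_uniq ?edits_uniq //.
  by rewrite node_atE; split=> //; apply: adjH_xmy.
case: (ltnP k (n_removed i + n_xx i)) => [lt_kx | le_xk].
  have lt_k' : k - n_removed i + n_added i < nXp i by lia.
  have [k' -> val_k'] := node_at_val kXp i (leq_trans lt_k' leXp).
  rewrite -/(xpnode i k') paired_xpnode mate0_xpnodeE val_k' lt_k' ltnNge leq_addl /=.
  rewrite ifT; last by lia.
  have -> : k - n_removed i + n_added i - n_added i + n_removed i = k by lia.
  by rewrite node_atE; split=> //; rewrite adjHC; apply: adjH_xpxm; rewrite ?val_k'.
have lt_k' : k - n_removed i - n_xx i < n_zm i by rewrite /n_zm; lia.
have [k' -> val_k'] := node_at_val kZm i (leq_trans lt_k' (leq_trans zm_le leZm)).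
rewrite -/(zmnode i k') paired_zmnode mate0_zmnodeE val_k' lt_k' (leq_trans lt_k' zm_le).
have -> : k - n_removed i - n_xx i + n_removed i + n_xx i = k by lia.
rewrite node_atE; split=> //; rewrite adjHC.
by apply: adjH_zmxm; rewrite ?val_k' ?(leq_trans lt_k' zm_le).
Qed.

Lemma mate0_zpnode i (k : 'I_n) : k < nZp i -> k < n_zp i ->
  [/\ paired (mate0 (zpnode i k)), mate0 (mate0 (zpnode i k)) = zpnode i k
    & adjH (zpnode i k) (mate0 (zpnode i k))].
Proof.
move=> lt_kZ lt_kz; have [_ add_le _ _] := layout_sizes i.
have [leXp _ _ _] := block_sizes_le E'_simple D_bounds i; have := n_xx_le i.
move: lt_kz; rewrite /n_zp => lt_kz xx_le.
have lt_k' : k + n_added i + n_xx i < nXp i by lia.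
rewrite mate0_zpnodeE; have [k' -> val_k'] := node_at_val kXp i (leq_trans lt_k' leXp).
rewrite -/(xpnode i k') paired_xpnode mate0_xpnodeE val_k' lt_k'.
rewrite ifF; last by lia. rewrite ifF; last by lia.
have -> : k + n_added i + n_xx i - n_added i - n_xx i = k by lia.
by rewrite node_atE; split=> //; apply: adjH_zpxp; rewrite ?val_k'.
Qed.

Lemma mate0_zmnode i (k : 'I_n) : k < nZm i -> k < n_zm i ->
  [/\ paired (mate0 (zmnode i k)), mate0 (mate0 (zmnode i k)) = zmnode i k
    & adjH (zmnode i k) (mate0 (zmnode i k))].
Proof.
move=> lt_kZ lt_kz; have [rem_le _ _ _] := layout_sizes i.
have [_ leXm _ _] := block_sizes_le E'_simple D_bounds i; have := n_xx_le i.
move: lt_kz; rewrite /n_zm => lt_kz xx_le.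
have lt_k' : k + n_removed i + n_xx i < nXm i by lia.
rewrite mate0_zmnodeE; have [k' -> val_k'] := node_at_val kXm i (leq_trans lt_k' leXm).
rewrite -/(xmnode i k') paired_xmnode mate0_xmnodeE val_k' lt_k'.
rewrite ifF; last by lia. rewrite ifF; last by lia.
have -> : k + n_removed i + n_xx i - n_removed i - n_xx i = k by lia.
by rewrite node_atE; split=> //; apply: adjH_zmxm; rewrite ?val_k'.
Qed.

Lemma mate0_paired v : paired v ->
  [/\ paired (mate0 v), mate0 (mate0 v) = v & adjH v (mate0 v)].
Proof.
case: v => [[[t i] k]|]; last by rewrite /paired andbF.
case: (kindP t).
- by rewrite -/(ynode i k) paired_ynode; apply: mate0_ynode.
- by rewrite -/(xpnode i k) paired_xpnode; apply: mate0_xpnode.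
- by rewrite -/(xmnode i k) paired_xmnode; apply: mate0_xmnode.
- by rewrite -/(zpnode i k) paired_zpnode => /andP[]; apply: mate0_zpnode.
- by rewrite -/(zmnode i k) paired_zmnode => /andP[]; apply: mate0_zmnode.
Qed.

Lemma spare_adj u w : spare u -> spare w -> u != w -> adj0 E' u w || adj0 E' w u.
Proof.
case: u => [[[t i] k]|]; case: w => [[[s j] l]|] //=.
- by case: (kindP t) => //= _; case: (kindP s) => //= _ _; rewrite !orbT.
- by case: (kindP t) => //= _; rewrite orbT.
- by case: (kindP s).
Qed.

(* \hat z is added exactly when the other nodes are odd in number. *)
Lemma inH_sum_even : ~~ odd (\sum_(v : node) inH v).
Proof.
rewrite big_option; have -> : inH None = odd (\sum_(x : 'I_5 * 'I_n * 'I_n) inH (Some x)).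
  by rewrite /= /hatz (card_sum_mem [pred v : node | base E' lo hi v]) big_option.
by rewrite oddD oddb addbb.
Qed.

Definition spare_nodes := enum [pred v : node | inH v && spare v].

Lemma spare_nodes_even : ~~ odd (size spare_nodes).
Proof.
have paired_even : ~~ odd #|[pred v | paired v]|.
  rewrite -cardsE; apply: (@fixfree_involution_card_even _ mate0) => v.
  rewrite !inE => /mate0_paired[? ? adj_v].
  by split=> //; have /and3P[_ _] := adjH_edge adj_v; rewrite eq_sym.
move: inH_sum_even paired_even; rewrite /spare_nodes -cardE !card_sum_mem.
have -> : \sum_(v : node) inH v = \sum_(v : node) (inH v && spare v) + \sum_(v : node) paired v.
  by rewrite -big_split; apply: eq_bigr => v _; rewrite /paired; case: (inH v); case: (spare v).
by rewrite oddD; case: (odd _); case: (odd _).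
Qed.

Definition mate_of_graph (v : node) : node :=
  if inH v && spare v then seq_partner spare_nodes v else if inH v then mate0 v else v.

Lemma mate_of_graph_spare v :
  inH v -> spare v -> mate_of_graph v = seq_partner spare_nodes v.
Proof. by rewrite /mate_of_graph => -> ->. Qed.

Lemma mate_of_graph_paired v : paired v -> mate_of_graph v = mate0 v.
Proof. by rewrite /mate_of_graph => /andP[-> /negbTE ->]. Qed.

Lemma mate_of_graphP : is_mate inH adjH mate_of_graph.
Proof.
split=> [v inHv | v /negbTE nv]; last by rewrite /mate_of_graph nv.
case: (boolP (spare v)) => [sv | nsv].
  have v_in : v \in spare_nodes by rewrite mem_enum inE inHv sv.
  have [w_in w_neq wK] := seq_partnerP (enum_uniq _) spare_nodes_even v_in.
  move: (w_in); rewrite mem_enum inE => /andP[inHw sw].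
  rewrite !mate_of_graph_spare // wK; split=> //.
  by rewrite /adjH inHv inHw eq_sym w_neq spare_adj // eq_sym.
have pv : paired v by rewrite /paired inHv nsv.
have [pm mK adj_m] := mate0_paired pv.
by rewrite !mate_of_graph_paired // mK.
Qed.

Lemma mate_of_graph_flip i l : ~~ isY (mate_of_graph (ynode i l)) = (E i l != E' i l).
Proof.
have [<- | il] := eqVneq i l.
  by rewrite /mate_of_graph /= eqxx /= (negbTE (E_simple.2 i)) (negbTE (E'_simple.2 i)).
rewrite mate_of_graph_paired ?paired_ynode // mate0_ynodeE.
by case: eqP => //= _; case: (E' i l).
Qed.

End GraphToMatching.

Theorem theorem4p1 (R : realFieldType) (n : nat) (E' : rel 'I_n)
    (c : 'I_n -> 'I_n -> R) (B : R) (lo hi : 'I_n -> nat) :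
  simple_graph E' ->
  (forall i j, c i j = c j i) ->
  (forall i j, i != j -> (0 <= c i j)%R) ->
  (0 <= B)%R ->
  (forall i, lo i <= hi i <= n.-1) ->
  (exists M : {set {set node n}},
      perfect_matching E' lo hi M /\ (matching_cost E' lo hi c M <= B)%R)
  <->
  (exists E : rel 'I_n,
      simple_graph E /\ (edit_cost E' c E <= B)%R /\
      forall i, lo i <= deg E i <= hi i).
Proof.
move=> E'_simple c_sym _ _ D_bounds.
have adjHC := @adjHC n E' lo hi; have adjH_edge := @adjH_edge n E' lo hi.
split=> [[M [PM cost_M]] | [E [E_simple [cost_E deg_E]]]].
- have mate_M := matching_mateP adjHC adjH_edge PM.
  have mate_graph_M := mate_graph_simple E'_simple mate_M.
  exists (mate_graph E' (matching_mate (adjH E' lo hi) M)); split=> //; split.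
    rewrite -(matching_cost_edit E'_simple c_sym mate_graph_M PM mate_M) //.
      exact: (matching_edgeE adjHC adjH_edge PM).
    exact: (mate_graph_flip E'_simple mate_M).
  exact: (deg_mate_graph E'_simple D_bounds mate_M).
- have mate_E := mate_of_graphP E'_simple D_bounds E_simple deg_E.
  exists (mate_matching (inH E' lo hi) (mate_of_graph E' lo hi E)).
  have PM := mate_matchingP mate_E; split=> //.
  rewrite (matching_cost_edit E'_simple c_sym E_simple PM mate_E) //.
    exact: (mate_matching_edgeE mate_E).
  exact: (mate_of_graph_flip lo hi E'_simple E_simple).
Qed.
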